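(* Let $N\ge 1$. Make the following two assumptions. (Exchangeability.) For every permutation $\sigma$ of $\{1,\dots,N\}$, the family $$\big((\bar a_{l-1})_{b,\sigma(m)}\big)_{l,b,m}\ \text{together with}\ \big(D^{(\sigma(n))}_{l,l'}(a,\sigma(m);c,\sigma(m'))\big)_{l,l',a,c,n,m,m'}$$ has the same joint distribution as the unpermuted family $\big((\bar a_{l-1})_{b,m}\big)$, $\big(D^{(n)}_{l,l'}(a,m;c,m')\big)$. (Factorization.) For all $l,l',a,b,c,d$ and all permutations $\pi,\pi'$ of $\{1,\dots,N\}$, $$\mathbb{E}\Big[\mathbb{E}_n\big[(\bar a_{l-1})_{b,\pi(n)}(\bar a_{l'-1})_{d,\pi'(n)}\,D^{(n)}_{l,l'}(a,\pi(n);c,\pi'(n))\big]\Big]=\mathbb{E}\Big[\mathbb{E}_n\big[(\bar a_{l-1})_{b,\pi(n)}(\bar a_{l'-1})_{d,\pi'(n)}\big]\Big]\cdot\mathbb{E}\Big[\mathbb{E}_n\big[D^{(n)}_{l,l'}(a,\pi(n);c,\pi'(n))\big]\Big].$$ Under these assumptions, $$H=\bar A*\mathcal{H}'+\frac{1}{\max(N-1,1)}\big(N\bar A'-\bar A\big)*(\mathcal{H}''-\mathcal{H}').$$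
   Context: Setting. Fix layer widths $C_0,\dots,C_L$ and a mini-batch size $N$. For $l=1,\dots,L$, let $\bar a_{l-1}\in\mathbb{R}^{(C_{l-1}+1)\times N}$ be random matrices; these are the activations of layer $l-1$ with a row of ones appended. For $n,m,m'\in\{1,\dots,N\}$, $l,l'\in\{1,\dots,L\}$, $a\in\{1,\dots,C_l\}$ and $c\in\{1,\dots,C_{l'}\}$, let $D^{(n)}_{l,l'}(a,m;c,m')$ be real random variables; these stand for the second derivatives $\partial^2\mathcal{L}_n/\partial(h_l)_{a,m}\partial(h_{l'})_{c,m'}$ of the $n$-th example's loss with respect to pre-activations. All these random variables are defined on a common probability space (the random sampling of a mini-batch with its labels). $\mathbb{E}$ denotes expectation over that randomness. $\mathbb{E}_n[\cdot]=\frac1N\sum_{n=1}^N[\cdot]$ is the average over the example index. All expectations appearing are assumed finite. Block matrices. Define block matrices whose $(l,l')$ blocks are as follows, with $\{M\}_{l,l'}$ denoting block $(l,l')$: - $(\{\bar A\}_{l,l'})_{b,d}=\mathbb{E}\big[\mathbb{E}_n[(\bar a_{l-1})_{b,n}(\bar a_{l'-1})_{d,n}]\big]$; - $(\{\bar A'\}_{l,l'})_{b,d}=\mathbb{E}\big[\mathbb{E}_n[(\bar a_{l-1})_{b,n}]\,\mathbb{E}_n[(\bar a_{l'-1})_{d,n}]\big]$; - $(\{\mathcal{H}'\}_{l,l'})_{a,c}=\mathbb{E}\big[\mathbb{E}_n[\sum_{m}D^{(n)}_{l,l'}(a,m;c,m)]\big]$; - $(\{\mathcal{H}''\}_{l,l'})_{a,c}=\mathbb{E}\big[\mathbb{E}_n[\sum_{m,m'}D^{(n)}_{l,l'}(a,m;c,m')]\big]$.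 So $\{\bar A\}_{l,l'}$ and $\{\bar A'\}_{l,l'}$ are $(C_{l-1}+1)\times(C_{l'-1}+1)$, and $\{\mathcal{H}'\}_{l,l'}$ and $\{\mathcal{H}''\}_{l,l'}$ are $C_l\times C_{l'}$. Let $H$ be the block matrix whose block $(l,l')$ has size $C_l(C_{l-1}+1)\times C_{l'}(C_{l'-1}+1)$. Its entry in row $(b-1)C_l+a$ and column $(d-1)C_{l'}+c$ is $$\mathbb{E}\Big[\mathbb{E}_n\Big[\sum_{m,m'}(\bar a_{l-1})_{b,m}(\bar a_{l'-1})_{d,m'}D^{(n)}_{l,l'}(a,m;c,m')\Big]\Big].$$ This is the expected Hessian of the averaged loss with respect to the column-major vectorized weights $\mathrm{vec}(W_l)$. Khatri–Rao product. For two block matrices $P,Q$ with the same block layout, $P*Q$ is the block matrix with blocks $\{P*Q\}_{l,l'}=\{P\}_{l,l'}\otimes\{Q\}_{l,l'}$, where $\otimes$ is the Kronecker product. *)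

From HB Require Import structures.
From mathcomp Require Import all_boot all_order all_algebra all_fingroup.
From mathcomp Require Import all_classical all_reals all_analysis.
Set Implicit Arguments. Unset Strict Implicit. Unset Printing Implicit Defensive.
Import Order.TTheory GRing.Theory Num.Theory.
Local Open Scope classical_set_scope.
Local Open Scope ring_scope.

(* Conventions (0-based indices):
   - layers l : 'I_L stand for the paper's layers 1..L (paper layer = l+1);
   - C : nat -> nat, C k = paper's C_k; so paper's C_{l-1} is [C l] and
     paper's C_l is [C l.+1];
   - abar l b m w  = (abar_{l-1})_{b,m}  (paper layer l+1), b : 'I_(C l).+1;
   - D l l' n a m c m' w = D^{(n)}_{l,l'}(a,m;c,m'). *)

Section Defs.
Variables (R : realType) (d : measure_display) (T : measurableType d).
Variables (L : nat) (C : nat -> nat) (N : nat).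

Definition act_family := forall l : 'I_L, 'I_(C l).+1 -> 'I_N -> T -> R.
Definition hess_family := forall l l' : 'I_L,
  'I_N -> 'I_(C l.+1) -> 'I_N -> 'I_(C l'.+1) -> 'I_N -> T -> R.

(* expectation (a real number; finiteness is ensured by integrability
   hypotheses in the theorem) *)
Definition Ex (P : probability T R) (X : T -> R) : R := fine ('E_P[X])%E.

Definition avgN (f : 'I_N -> R) : R := N%:R^-1 * \sum_(n < N) f n.

(* Exchangeability: equality of the joint distributions of the (finite)
   permuted and unpermuted families, i.e. equality of the probabilities of
   all measurable rectangles (which determine the joint law). *)
Definition exchangeable (P : probability T R) (abar : act_family)
  (D : hess_family) : Prop :=
  forall (s : 'S_N)
    (Ba : forall l : 'I_L, 'I_(C l).+1 -> 'I_N -> set R)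
    (BD : forall l l' : 'I_L,
       'I_N -> 'I_(C l.+1) -> 'I_N -> 'I_(C l'.+1) -> 'I_N -> set R),
    (forall l b m, measurable (Ba l b m)) ->
    (forall l l' n a m c m', measurable (BD l l' n a m c m')) ->
    P [set w | (forall l b m, Ba l b m (abar l b (s m) w)) /\
               (forall l l' n a m c m',
                  BD l l' n a m c m' (D l l' (s n) a (s m) c (s m') w))]
    = P [set w | (forall l b m, Ba l b m (abar l b m w)) /\
                 (forall l l' n a m c m',
                    BD l l' n a m c m' (D l l' n a m c m' w))].

Definition factorizes (P : probability T R) (abar : act_family)
  (D : hess_family) : Prop :=
  forall (l l' : 'I_L) (b : 'I_(C l).+1) (dd : 'I_(C l').+1)
    (a : 'I_(C l.+1)) (c : 'I_(C l'.+1)) (pi pi' : 'S_N),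
  Ex P (fun w => avgN (fun n =>
          abar l b (pi n) w * abar l' dd (pi' n) w
          * D l l' n a (pi n) c (pi' n) w))
  = Ex P (fun w => avgN (fun n => abar l b (pi n) w * abar l' dd (pi' n) w))
    * Ex P (fun w => avgN (fun n => D l l' n a (pi n) c (pi' n) w)).

Definition Abar_blk (P : probability T R) (abar : act_family) (l l' : 'I_L)
  : 'M[R]_((C l).+1, (C l').+1) :=
  \matrix_(b, dd) Ex P (fun w => avgN (fun n => abar l b n w * abar l' dd n w)).

Definition Abar'_blk (P : probability T R) (abar : act_family) (l l' : 'I_L)
  : 'M[R]_((C l).+1, (C l').+1) :=
  \matrix_(b, dd) Ex P (fun w => avgN (fun n => abar l b n w)
                                 * avgN (fun n => abar l' dd n w)).

Definition H'_blk (P : probability T R) (D : hess_family) (l l' : 'I_L)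
  : 'M[R]_(C l.+1, C l'.+1) :=
  \matrix_(a, c) Ex P (fun w => avgN (fun n =>
                         \sum_(m < N) D l l' n a m c m w)).

Definition H''_blk (P : probability T R) (D : hess_family) (l l' : 'I_L)
  : 'M[R]_(C l.+1, C l'.+1) :=
  \matrix_(a, c) Ex P (fun w => avgN (fun n =>
                         \sum_(m < N) \sum_(m' < N) D l l' n a m c m' w)).

End Defs.

(* Splitting an index k : 'I_(p*q) into (i,j) with k = i*q + j
   (inverse of mathcomp's mxvec_index). *)
Definition vsplit (p q : nat) (k : 'I_(p * q)) : 'I_p * 'I_q :=
  enum_val (cast_ord (esym (mxvec_cast p q)) k).

(* Kronecker product: entry (i1*m2+i2, j1*n2+j2) is A i1 j1 * B i2 j2 *)
Definition kron (R : pzRingType) (m1 n1 m2 n2 : nat)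
  (A : 'M[R]_(m1, n1)) (B : 'M[R]_(m2, n2)) : 'M[R]_(m1 * m2, n1 * n2) :=
  \matrix_(i, j) (A (vsplit i).1 (vsplit j).1 * B (vsplit i).2 (vsplit j).2).

Lemma vsplit_mxvec_index (p q : nat) (i : 'I_p) (j : 'I_q) :
  vsplit (mxvec_index i j) = (i, j).
Proof. by rewrite /vsplit /mxvec_index cast_ordK enum_rankK. Qed.



(* Block (l,l') of the expected Hessian H, rows indexed by (b,a) with
   paper row (b-1)C_l + a, columns by (d,c). *)
Definition H_blk (R : realType) (d : measure_display) (T : measurableType d)
  (L : nat) (C : nat -> nat) (N : nat) (P : probability T R)
  (abar : act_family R T L C N) (D : hess_family R T L C N) (l l' : 'I_L)
  : 'M[R]_((C l).+1 * C l.+1, (C l').+1 * C l'.+1) :=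
  \matrix_(i, j)
    let: (b, a) := vsplit i in let: (dd, c) := vsplit j in
    Ex P (fun w => avgN (fun n =>
       \sum_(m < N) \sum_(m' < N)
          abar l b m w * abar l' dd m' w * D l l' n a m c m' w)).

From HB Require Import structures.
From mathcomp Require Import all_boot all_order all_algebra all_fingroup.
From mathcomp Require Import all_classical all_reals all_analysis.
From mathcomp Require Import measurable_realfun zify ring.
Import Order.TTheory GRing.Theory Num.Theory.
Local Open Scope classical_set_scope.
Local Open Scope ring_scope.

Set Implicit Arguments. Unset Strict Implicit.

(* By
   linearity of expectation, the entry of H and the entries of A, A', H',
   H'' are batch means of three families of moments:
     e m m'   = E[a_{l,b,m} a_{l',d,m'}],
     f n m m' = E[D^(n)(a,m;c,m')],
     g n m m' = E[a_{l,b,m} a_{l',d,m'} D^(n)(a,m;c,m')].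
   Exchangeability of the batch makes e invariant under simultaneous
   permutations of (m, m') (a change of law argument on the pair of
   activations), so e takes one value on the diagonal and one off it, and
   the latter is (N A' - A) / (N - 1).  Reindexing the double sum over
   (m, m') by cyclic shifts (n + k, n + k') and applying the factorization
   hypothesis to each pair of shifts then gives the claimed identity. *)

(* Two pairs of real random variables whose joint laws agree on measurable
   rectangles have the same expected product: rectangles form a pi-system
   generating the product sigma-algebra of R * R, so the laws of (X1, Y1)
   and (X2, Y2) coincide, and E[X Y] is an integral against that law. *)
Section ExpectationProductLaw.
Variables (R : realType) (d : measure_display) (T : measurableType d)
  (P : probability T R) (X1 Y1 X2 Y2 : T -> R).
Hypotheses (mX1 : measurable_fun setT X1) (mY1 : measurable_fun setT Y1)
  (mX2 : measurable_fun setT X2) (mY2 : measurable_fun setT Y2).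
Hypothesis same_law : forall A B : set R, measurable A -> measurable B ->
  P [set w | A (X1 w) /\ B (Y1 w)] = P [set w | A (X2 w) /\ B (Y2 w)].

Let pair1 := fun w => (X1 w, Y1 w).
Let pair2 := fun w => (X2 w, Y2 w).
Let mpair1 : measurable_fun setT pair1. Proof. exact: measurable_fun_pair. Qed.
Let mpair2 : measurable_fun setT pair2. Proof. exact: measurable_fun_pair. Qed.
Let product := fun z : R * R => (z.1 * z.2)%:E.
Let mproduct : measurable_fun setT product.
Proof. by apply: measurableT_comp => //; exact: measurable_funM. Qed.

Lemma joint_laws_eq (A : set (R * R)) : measurable A ->
  pushforward P pair1 A = pushforward P pair2 A.
Proof.
move=> mA.
apply: (measure_unique [set A `*` B | A in measurable & B in measurable]
  (fun _ => setT)) => //.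
- exact: measurable_prod_measurableType.
- move=> _ _ [A1 mA1 [B1 mB1 <-]] [A2 mA2 [B2 mB2 <-]].
  rewrite -setXI; exists (A1 `&` A2); first exact: measurableI.
  by exists (B1 `&` B2) => //; exact: measurableI.
- by move=> _; exists setT => //; exists setT => //; rewrite setXTT.
- by rewrite bigcup_const.
- by move=> _ [A1 mA1 [B1 mB1 <-]]; exact: same_law.
- by move=> _ /=; rewrite /pushforward preimage_setT probability_setT ltry.
Qed.

Lemma expectation_mul_same_law :
  P.-integrable setT (EFin \o (fun w => X1 w * Y1 w)) ->
  P.-integrable setT (EFin \o (fun w => X2 w * Y2 w)) ->
  ('E_P[fun w => (X1 w * Y1 w)%R] = 'E_P[fun w => (X2 w * Y2 w)%R])%E.
Proof.
move=> i1 i2; rewrite unlock.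
have j1 : P.-integrable (pair1 @^-1` setT) (product \o pair1).
  by rewrite preimage_setT.
have j2 : P.-integrable (pair2 @^-1` setT) (product \o pair2).
  by rewrite preimage_setT.
have := @integral_pushforward _ _ _ _ R _ mpair1 P _ _ mproduct j1 measurableT.
have := @integral_pushforward _ _ _ _ R _ mpair2 P _ _ mproduct j2 measurableT.
rewrite !preimage_setT => <- <-.
by apply: eq_measure_integral => A mA _; exact: joint_laws_eq.
Qed.

End ExpectationProductLaw.

Section ExLinearity.
Variables (R : realType) (d : measure_display) (T : measurableType d)
  (P : probability T R).

Lemma ExE (X : T -> R) : X \in Lfun P 1 -> ('E_P[X] = (Ex P X)%:E)%E.
Proof. by move=> hX; rewrite /Ex fineK// expectation_fin_num. Qed.

Lemma Lfun_sum (I : Type) (r : seq I) (F : I -> T -> R) :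
  (forall i, F i \in Lfun P 1) -> (fun w => \sum_(i <- r) F i w) \in Lfun P 1.
Proof. by move=> hF; rewrite -fct_sumE; apply: rpred_sum. Qed.

Lemma Lfun_scale1 (k : R) (X : T -> R) : X \in Lfun P 1 ->
  (fun w => k * X w) \in Lfun P 1.
Proof.
move=> hX; rewrite (_ : (fun w => _) = k \o* X); last first.
  by apply/funext => w /=; rewrite mulrC.
exact: Lfun_scale.
Qed.

Lemma ExD (X Y : T -> R) : X \in Lfun P 1 -> Y \in Lfun P 1 ->
  Ex P (fun w => X w + Y w) = Ex P X + Ex P Y.
Proof.
move=> hX hY; apply: EFin_inj; rewrite -ExE; last exact: rpredD.
by rewrite (expectationD hX hY) (ExE hX) (ExE hY).
Qed.

Lemma Ex_sum (I : Type) (r : seq I) (F : I -> T -> R) :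
  (forall i, F i \in Lfun P 1) ->
  Ex P (fun w => \sum_(i <- r) F i w) = \sum_(i <- r) Ex P (F i).
Proof.
move=> hF; elim: r => [|i r IH].
  by under eq_fun do rewrite big_nil; rewrite big_nil /Ex expectation_cst.
under eq_fun do rewrite big_cons.
by rewrite ExD ?big_cons ?IH //; exact: Lfun_sum.
Qed.

Lemma Ex_scale (k : R) (X : T -> R) : X \in Lfun P 1 ->
  Ex P (fun w => k * X w) = k * Ex P X.
Proof.
move=> hX; apply: EFin_inj; rewrite -ExE; last exact: Lfun_scale1.
rewrite EFinM -(ExE hX) -expectationZl //.
by congr 'E_P[_]%E; apply/funext => w /=; rewrite mulrC.
Qed.

Variable N : nat.

Lemma Ex_avg (F : 'I_N -> T -> R) :
  (forall i, F i \in Lfun P 1) ->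
  Ex P (fun w => avgN (fun n => F n w)) = N%:R^-1 * \sum_(n < N) Ex P (F n).
Proof. by move=> hF; rewrite /avgN Ex_scale ?Ex_sum //; exact: Lfun_sum. Qed.

Lemma Ex_avg_sum (F : 'I_N -> 'I_N -> T -> R) :
  (forall n m, F n m \in Lfun P 1) ->
  Ex P (fun w => avgN (fun n => \sum_(m < N) F n m w))
  = N%:R^-1 * \sum_(n < N) \sum_(m < N) Ex P (F n m).
Proof.
move=> hF; rewrite Ex_avg => [|n]; last exact: Lfun_sum.
by congr (_ * _); apply: eq_bigr => n _; rewrite Ex_sum.
Qed.

Lemma Ex_avg_sum2 (F : 'I_N -> 'I_N -> 'I_N -> T -> R) :
  (forall n m m', F n m m' \in Lfun P 1) ->
  Ex P (fun w => avgN (fun n => \sum_(m < N) \sum_(m' < N) F n m m' w))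
  = N%:R^-1 * \sum_(n < N) \sum_(m < N) \sum_(m' < N) Ex P (F n m m').
Proof.
move=> hF; rewrite Ex_avg_sum => [|n m]; last exact: Lfun_sum.
by congr (_ * _); apply: eq_bigr => n _; apply: eq_bigr => m _; rewrite Ex_sum.
Qed.

Lemma avgN_mul (x y : 'I_N -> R) :
  avgN x * avgN y = avgN (fun m => avgN (fun m' => x m * y m')).
Proof.
rewrite /avgN -[in RHS]mulr_sumr mulrACA mulr_suml [RHS]mulrA.
by congr (_ * _); apply: eq_bigr => m _; rewrite mulr_sumr.
Qed.

Lemma Ex_avg_mul (X Y : 'I_N -> T -> R) :
  (forall m m', (fun w => X m w * Y m' w) \in Lfun P 1) ->
  Ex P (fun w => avgN (fun n => X n w) * avgN (fun n => Y n w))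
  = N%:R^-1 * \sum_(m < N) (N%:R^-1 * \sum_(m' < N)
      Ex P (fun w => X m w * Y m' w)).
Proof.
move=> hXY; under eq_fun do rewrite avgN_mul.
rewrite Ex_avg => [|m]; last by apply: Lfun_scale1; exact: Lfun_sum.
by congr (_ * _); apply: eq_bigr => m _; rewrite Ex_avg.
Qed.

End ExLinearity.

Section ExchangeableActivations.
(* The layer index of [abar] and [D] must stay an explicit argument. *)
Unset Implicit Arguments.
Variables (R : realType) (d : measure_display) (T : measurableType d)
  (P : probability T R) (L : nat) (C : nat -> nat) (N : nat)
  (abar : act_family R T L C N) (D : hess_family R T L C N).
Hypothesis hex : exchangeable P abar D.

Section TwoActivations.
Variables (l l' : 'I_L) (b : 'I_(C l).+1) (dd : 'I_(C l').+1) (m m' : 'I_N)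
  (A B : set R).

(* The rectangle constraining a_{l,b,m} to A and a_{l',d,m'} to B, and
   nothing else, as an instance of the family of sets in [exchangeable]. *)
Let Ba (l0 : 'I_L) (b0 : 'I_(C l0).+1) (m0 : 'I_N) : set R :=
  (if [&& l0 == l, (b0 : nat) == b & m0 == m] then A else setT) `&`
  (if [&& l0 == l', (b0 : nat) == dd & m0 == m'] then B else setT).
Let BD (l0 l0' : 'I_L) (n : 'I_N) (a0 : 'I_(C l0.+1)) (m0 : 'I_N)
  (c0 : 'I_(C l0'.+1)) (m0' : 'I_N) : set R := setT.

Let rectangleE (h hn : 'I_N -> 'I_N) :
  [set w | (forall l0 b0 m0, Ba l0 b0 m0 (abar l0 b0 (h m0) w)) /\
           (forall l0 l0' n a0 m0 c0 m0',
              BD l0 l0' n a0 m0 c0 m0' (D l0 l0' (hn n) a0 (h m0) c0 (h m0') w))]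
  = [set w | A (abar l b (h m) w) /\ B (abar l' dd (h m') w)].
Proof.
apply/seteqP; split => w /=.
  move=> [hb _]; split.
    by have [+ _] := hb l b m; rewrite !eqxx.
  by have [_] := hb l' dd m'; rewrite !eqxx.
move=> [hA hB]; split => // l0 b0 m0; split.
  case: ifP => // /and3P[/eqP el /eqP eb /eqP em]; subst l0 m0.
  by rewrite (_ : b0 = b) //; exact: val_inj.
case: ifP => // /and3P[/eqP el /eqP eb /eqP em]; subst l0 m0.
by rewrite (_ : b0 = dd) //; exact: val_inj.
Qed.

Lemma exchangeable_pair_law (s : 'S_N) : measurable A -> measurable B ->
  P [set w | A (abar l b (s m) w) /\ B (abar l' dd (s m') w)]
  = P [set w | A (abar l b m w) /\ B (abar l' dd m' w)].
Proof.
move=> mA mB.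
have mBa l0 b0 m0 : measurable (Ba l0 b0 m0) by apply: measurableI; case: ifP.
rewrite -(rectangleE s s) -(rectangleE id id).
exact: (hex s Ba BD mBa (fun _ _ _ _ _ _ _ => measurableT)).
Qed.

End TwoActivations.

Hypothesis ma : forall l b m, measurable_fun setT (abar l b m).
Hypothesis iaa : forall l l' b dd m m',
  P.-integrable setT (EFin \o (fun w => abar l b m w * abar l' dd m' w)).

Lemma exchangeable_second_moment l l' b dd m m' (s : 'S_N) :
  Ex P (fun w => abar l b (s m) w * abar l' dd (s m') w)
  = Ex P (fun w => abar l b m w * abar l' dd m' w).
Proof.
rewrite /Ex; congr fine; apply: expectation_mul_same_law => //.
by move=> A B mA mB; exact: exchangeable_pair_law.
Qed.

End ExchangeableActivations.
Arguments exchangeable_second_moment {R d T P L C N abar D}.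

(* Means over a batch of size N > 0.  We use the cyclic shifts
   n |-> n + k (mod N) of the batch indices: for a fixed n, k |-> n + k is a
   bijection, so any double sum over (m, m') can be reindexed by a pair of
   shifts (k, k') applied to the same n. *)
Section BatchSums.
Variables (N : nat) (N_gt0 : (0 < N)%N).

Definition shift_fun (k n : 'I_N) : 'I_N := Ordinal (ltn_pmod (n + k) N_gt0).

Lemma shift_fun_inj k : injective (shift_fun k).
Proof.
move=> n1 n2 /(congr1 val) /= /eqP; rewrite eqn_modDr !modn_small // => /eqP.
exact: val_inj.
Qed.

Definition shift (k : 'I_N) : 'S_N := perm (shift_fun_inj k).

Lemma shift_inj_k n : injective (fun k => shift k n).
Proof.
move=> k1 k2 /=; rewrite !permE => /(congr1 val) /= /eqP.
by rewrite eqn_modDl !modn_small // => /eqP /val_inj.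
Qed.

Lemma sum_shift (R : nmodType) (G : 'I_N -> R) n :
  \sum_(m < N) G m = \sum_(k < N) G (shift k n).
Proof. exact: (reindex_inj (@shift_inj_k n)). Qed.

Lemma sum_shift2 (R : nmodType) (G : 'I_N -> 'I_N -> R) n :
  \sum_(m < N) \sum_(m' < N) G m m' =
  \sum_(k < N) \sum_(k' < N) G (shift k n) (shift k' n).
Proof.
rewrite (sum_shift _ (fun m => \sum_(m' < N) G m m') n).
by apply: eq_bigr => k _; exact: sum_shift.
Qed.

Section InvariantMatrix.
Variables (R : numFieldType) (e : 'I_N -> 'I_N -> R).
Hypothesis e_inv : forall (s : 'S_N) m m', e (s m) (s m') = e m m'.

Let Ab := N%:R^-1 * \sum_(n < N) e n n.
Let Ab' := N%:R^-1 * \sum_(m < N) (N%:R^-1 * \sum_(m' < N) e m m').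
Let c := (maxn (N - 1) 1)%:R^-1 : R.
Let N_neq0 : N%:R != 0 :> R. Proof. by rewrite pnatr_eq0 -lt0n. Qed.
Let sum_const (x : R) : \sum_(i < N) x = N%:R * x.
Proof. by rewrite sumr_const card_ord mulr_natl. Qed.

(* Any off-diagonal position is mapped to any other by a permutation. *)
Lemma invariant_offdiag m m' p p' : m != m' -> p != p' -> e m m' = e p p'.
Proof.
move=> mm' pp'.
have qp : tperm m p m' != p.
  by rewrite -{2}(tpermL m p) (inj_eq (@perm_inj _ (tperm m p))) eq_sym.
pose s := (tperm m p * tperm (tperm m p m') p')%g.
have sm : s m = p by rewrite permM tpermL tpermD // eq_sym.
have sm' : s m' = p' by rewrite permM tpermL.
by rewrite -(e_inv s m m') sm sm'.
Qed.

Lemma invariant_offdiagE m m' : m != m' -> e m m' = c * (N%:R * Ab' - Ab).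
Proof.
move=> mm'.
have N_gt1 : (1 < N)%N.
  have : (m : nat) <> m' by move=> /val_inj /eqP; rewrite (negbTE mm').
  by have := ltn_ord m; have := ltn_ord m'; lia.
have row_sum p : \sum_(p' < N) e p p' = e p p + (N%:R - 1) * e m m'.
  rewrite (bigD1 p) //=; congr (_ + _).
  rewrite (eq_bigr (fun _ => e m m')); last first.
    by move=> p' pp'; apply: invariant_offdiag => //; rewrite eq_sym.
  have -> : N%:R - 1 = N.-1%:R :> R by rewrite -subn1 natrB ?(ltnW N_gt1).
  by rewrite sumr_const cardC1 card_ord mulr_natl.
have -> : Ab' = N%:R^-1 * Ab + N%:R^-1 * (N%:R - 1) * e m m'.
  rewrite /Ab' /Ab; under eq_bigr do rewrite row_sum mulrDr.
  rewrite big_split /= -mulr_sumr sum_const; field.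
  exact: N_neq0.
have N1_neq0 : (N%:R - 1 : R) != 0 by rewrite subr_eq0 pnatr_eq1; lia.
rewrite /c (_ : maxn (N - 1) 1 = (N - 1)%N); last by apply/maxn_idPl; lia.
rewrite natrB ?(ltnW N_gt1) //; field.
by rewrite N1_neq0 N_neq0.
Qed.

Lemma shifted_diagonal_mean k k' :
  N%:R^-1 * \sum_(n < N) e (shift k n) (shift k' n)
  = if k == k' then Ab else c * (N%:R * Ab' - Ab).
Proof.
case: eqP => [<-|/eqP kk'].
  by rewrite /Ab [in RHS](reindex_inj (@perm_inj _ (shift k))).
rewrite (eq_bigr (fun _ => c * (N%:R * Ab' - Ab))); last first.
  move=> n _; apply: invariant_offdiagE.
  by apply: contra_neq kk' => /shift_inj_k.
by rewrite sum_const mulKf.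
Qed.

(* Reindexing
   (m, m') by shifts (n + k, n + k') turns the triple mean into a sum over
   (k, k') of factorized means, where e contributes [Ab] for k = k' and
   the off-diagonal value otherwise. *)
Section Factorization.
Variables (f g : 'I_N -> 'I_N -> 'I_N -> R).
Hypothesis factorization : forall pi pi' : 'S_N,
  N%:R^-1 * \sum_(n < N) g n (pi n) (pi' n)
  = (N%:R^-1 * \sum_(n < N) e (pi n) (pi' n))
    * (N%:R^-1 * \sum_(n < N) f n (pi n) (pi' n)).

Let H1 := N%:R^-1 * \sum_(n < N) \sum_(m < N) f n m m.
Let H2 := N%:R^-1 * \sum_(n < N) \sum_(m < N) \sum_(m' < N) f n m m'.
Let F k k' := N%:R^-1 * \sum_(n < N) f n (shift k n) (shift k' n).

Let shift_triple_sum (h : 'I_N -> 'I_N -> 'I_N -> R) :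
  \sum_(n < N) \sum_(m < N) \sum_(m' < N) h n m m'
  = \sum_(k < N) \sum_(k' < N) \sum_(n < N) h n (shift k n) (shift k' n).
Proof.
under eq_bigr => n _ do rewrite (sum_shift2 _ (h n) n).
by rewrite exchange_big; apply: eq_bigr => k _; exact: exchange_big.
Qed.

Lemma factorized_triple_mean :
  N%:R^-1 * \sum_(n < N) \sum_(m < N) \sum_(m' < N) g n m m'
  = Ab * H1 + c * ((N%:R * Ab' - Ab) * (H2 - H1)).
Proof.
set beta := c * (N%:R * Ab' - Ab).
have H1E : H1 = \sum_(k < N) F k k.
  rewrite /H1 /F -mulr_sumr; congr (_ * _).
  under eq_bigr => n _ do rewrite (sum_shift _ (fun m => f n m m) n).
  exact: exchange_big.
have H2E : H2 = \sum_(k < N) \sum_(k' < N) F k k'.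
  rewrite /H2 /F shift_triple_sum mulr_sumr; apply: eq_bigr => k _.
  by rewrite mulr_sumr.
have row k : \sum_(k' < N) (if k == k' then Ab else beta) * F k k'
    = Ab * F k k + beta * (\sum_(k' < N) F k k' - F k k).
  rewrite (bigD1 k) //= eqxx [in RHS](bigD1 k) //= (addrC (F k k)) addrK.
  rewrite mulr_sumr.
  by congr (_ + _); apply: eq_bigr => k' k'k; rewrite eq_sym (negbTE k'k).
rewrite shift_triple_sum mulr_sumr.
under eq_bigr => k _.
  rewrite mulr_sumr.
  under eq_bigr => k' _ do rewrite factorization shifted_diagonal_mean.
  rewrite row.
  over.
rewrite big_split /= -mulr_sumr -[\sum_(k < N) beta * _]mulr_sumr sumrB.
by rewrite H1E H2E /beta (mulrA c).
Qed.

End Factorization.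

End InvariantMatrix.

End BatchSums.

Lemma expected_hessian_entry (R : realType) (d : measure_display)
  (T : measurableType d) (P : probability T R) (L : nat) (C : nat -> nat)
  (N : nat) (abar : act_family R T L C N) (D : hess_family R T L C N)
  (l l' : 'I_L) (b : 'I_(C l).+1) (dd : 'I_(C l').+1)
  (a : 'I_(C l.+1)) (c : 'I_(C l'.+1)) :
  (0 < N)%N ->
  (forall l b m, measurable_fun setT (abar l b m)) ->
  (forall l l' b dd m m',
     P.-integrable setT (EFin \o (fun w => abar l b m w * abar l' dd m' w))) ->
  (forall l l' n a m c m', P.-integrable setT (EFin \o D l l' n a m c m')) ->
  (forall l l' b dd n a m c m', P.-integrable setT
     (EFin \o (fun w => abar l b m w * abar l' dd m' w * D l l' n a m c m' w))) ->
  exchangeable P abar D -> factorizes P abar D ->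
  let Ab := Ex P (fun w => avgN (fun n => abar l b n w * abar l' dd n w)) in
  let Ab' := Ex P (fun w => avgN (fun n => abar l b n w)
                            * avgN (fun n => abar l' dd n w)) in
  let H1 := Ex P (fun w => avgN (fun n => \sum_(m < N) D l l' n a m c m w)) in
  let H2 := Ex P (fun w => avgN (fun n =>
              \sum_(m < N) \sum_(m' < N) D l l' n a m c m' w)) in
  Ex P (fun w => avgN (fun n => \sum_(m < N) \sum_(m' < N)
    abar l b m w * abar l' dd m' w * D l l' n a m c m' w))
  = Ab * H1 + (maxn (N - 1) 1)%:R^-1 * ((N%:R * Ab' - Ab) * (H2 - H1)).
Proof.
move=> N_gt0 ma iaa iD iaaD hex hfact /=.
have Laa m m' : (fun w => abar l b m w * abar l' dd m' w) \in Lfun P 1.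
  exact/Lfun1_integrable/iaa.
have LD n m m' : D l l' n a m c m' \in Lfun P 1 by exact/Lfun1_integrable/iD.
have LaaD n m m' : (fun w => abar l b m w * abar l' dd m' w
                     * D l l' n a m c m' w) \in Lfun P 1.
  exact/Lfun1_integrable/iaaD.
rewrite (Ex_avg_sum2 LaaD) (Ex_avg (fun n => Laa n n)) (Ex_avg_mul Laa).
rewrite (Ex_avg_sum (fun n m => LD n m m)) (Ex_avg_sum2 LD).
pose e m m' := Ex P (fun w => abar l b m w * abar l' dd m' w).
pose f n m m' := Ex P (D l l' n a m c m').
pose g n m m' := Ex P (fun w => abar l b m w * abar l' dd m' w
                                * D l l' n a m c m' w).
apply: (@factorized_triple_mean N N_gt0 R e _ f g) => [s m m'|pi pi'].
  exact: (exchangeable_second_moment hex ma iaa l l' b dd m m' s).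
by have := hfact l l' b dd a c pi pi'; rewrite !Ex_avg.
Qed.

Theorem theorem2 (R : realType) (d : measure_display) (T : measurableType d)
  (P : probability T R) (L : nat) (C : nat -> nat) (N : nat)
  (abar : act_family R T L C N) (D : hess_family R T L C N) :
  (0 < N)%N ->
  (forall l b m, measurable_fun setT (abar l b m)) ->
  (forall l l' n a m c m', measurable_fun setT (D l l' n a m c m')) ->
  (forall l l' b dd m m',
     P.-integrable setT (EFin \o (fun w => abar l b m w * abar l' dd m' w))) ->
  (forall l l' n a m c m', P.-integrable setT (EFin \o D l l' n a m c m')) ->
  (forall l l' b dd n a m c m',
     P.-integrable setT
       (EFin \o (fun w => abar l b m w * abar l' dd m' w
                          * D l l' n a m c m' w))) ->
  exchangeable P abar D ->
  factorizes P abar D ->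
  forall l l' : 'I_L,
    H_blk P abar D l l'
    = kron (Abar_blk P abar l l') (H'_blk P D l l')
      + (maxn (N - 1) 1)%:R^-1 *:
          kron (N%:R *: Abar'_blk P abar l l' - Abar_blk P abar l l')
               (H''_blk P D l l' - H'_blk P D l l').
Proof.
move=> N_gt0 ma _ iaa iD iaaD hex hfact l l'.
apply/matrixP => i j; rewrite !mxE.
case: (vsplit i) => b a; case: (vsplit j) => dd c /=.
exact: expected_hessian_entry.
Qed.
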